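(* Let $T$ be a tree on $[n]$ and $G$ a connected graph on $[n]$. Then $T(G)=T$ if and only if $G$ can be obtained from $T$ by adding some subset of the edges permitted by ${\bf oDFS}(T)$.
   Context: Ordered depth-first search. For a connected graph $G$ on $[n]$, ${\bf oDFS}(G)$ is the procedure: set $\mathcal O_0=(1)$ (an ordered list) and $\mathcal A_0=\emptyset$. For $i=0,1,\dots,n-1$: let $v_i$ be the first element of $\mathcal O_i$; let $\mathcal N_i$ be the set of neighbours of $v_i$ in $[n]\setminus(\mathcal A_i\cup\mathcal O_i)$; set $\mathcal A_{i+1}=\mathcal A_i\cup\{v_i\}$; form $\mathcal O_{i+1}$ by removing $v_i$ from the front of $\mathcal O_i$ and then placing the elements of $\mathcal N_i$, in increasing order, at the front. The depth-first tree $T(G)$ is the spanning tree of $G$ with edge set $\{v_iy:0\le i<n,\ y\in\mathcal N_i\}$. For a tree $T$ on $[n]$, an edge $uv\notin E(T)$ is permitted by ${\bf oDFS}(T)$ if there is $i$ with $u,v\in\mathcal O_i$ (stacks computed by running ${\bf oDFS}(T)$). *)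

(* Vertices are the natural numbers 1..n; a graph on [n] is a
   boolean relation on nat (symmetric, irreflexive, supported on [n]). *)
From mathcomp Require Import all_boot.
Set Implicit Arguments. Unset Strict Implicit. Unset Printing Implicit Defensive.

Definition graph_on (n : nat) (e : rel nat) : Prop :=
  [/\ (forall u v, e u v = e v u),
      (forall u, ~~ e u u) &
      (forall u v, e u v -> (1 <= u <= n) && (1 <= v <= n))].

Definition connected_on (n : nat) (e : rel nat) : Prop :=
  forall u v, 1 <= u <= n -> 1 <= v <= n ->
    exists p : seq nat, path e u p && (last u p == v).

Definition acyclic (e : rel nat) : Prop :=
  forall c : seq nat, uniq c -> 2 < size c -> ~~ cycle e c.

Definition is_tree (n : nat) (e : rel nat) : Prop :=
  [/\ graph_on n e, connected_on n e & acyclic e].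

(* state = (O_i, A_i); O_i is the ordered stack, A_i the set (list) of visited *)
Definition odfs_new (n : nat) (e : rel nat) (st : seq nat * seq nat) : seq nat :=
  [seq y <- iota 1 n | e (head 0 st.1) y && (y \notin st.2) && (y \notin st.1)].

Definition odfs_step (n : nat) (e : rel nat) (st : seq nat * seq nat)
  : seq nat * seq nat :=
  (odfs_new n e st ++ behead st.1, head 0 st.1 :: st.2).

Definition odfs_state (n : nat) (e : rel nat) (i : nat) : seq nat * seq nat :=
  iter i (odfs_step n e) ([:: 1], [::]).

Definition odfs_O n e i : seq nat := (odfs_state n e i).1.
Definition odfs_v n e i : nat := head 0 (odfs_O n e i).
Definition odfs_N n e i : seq nat := odfs_new n e (odfs_state n e i).

Definition dfs_tree (n : nat) (e : rel nat) : rel nat :=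
  fun u v => has (fun i => ((u == odfs_v n e i) && (v \in odfs_N n e i))
                         || ((v == odfs_v n e i) && (u \in odfs_N n e i)))
                 (iota 0 n).

Definition permitted (n : nat) (t : rel nat) (u v : nat) : bool :=
  (u != v) && ~~ t u v &&
  has (fun i => (u \in odfs_O n t i) && (v \in odfs_O n t i)) (iota 0 n).

(* Write O_i, A_i for the stack and the visited list after i steps of oDFS and
   v_i for the top of O_i; call a vertex fresh at step i if it lies neither in
   A_i nor in O_i.  Step i only looks at the edges from v_i to fresh vertices,
   and turns every one of them into an edge of T(G).  Hence:
   - if T(G) = T, the runs of oDFS on G and on T coincide step by step, and an
     edge of G outside T(G) joins two vertices lying together on some stack
     (the first of its endpoints to be visited sees the other one on the stack);
     so it is permitted by oDFS(T);
   - a permitted edge is never fresh at any step (once its endpoints share a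
     stack, one of them is stacked or visited whenever the other is on top), so
     adding permitted edges to T does not change the run and T(T + S) = T(T).
   Finally T(T) = T for a tree T: T(T) is contained in T, it links every vertex
   to the root because oDFS visits all n vertices of a connected graph within n
   steps, and a connected spanning subgraph of an acyclic graph is all of it. *)
From mathcomp Require Import all_boot.
Set Implicit Arguments. Unset Strict Implicit. Unset Printing Implicit Defensive.

Lemma mem_behead_neq_head (s : seq nat) x : x \in s -> x != head 0 s -> x \in behead s.
Proof. by case: s => //= a s; rewrite in_cons => /orP [/eqP->|]; rewrite ?eqxx. Qed.

Lemma head_mem_nonzero (s : seq nat) : head 0 s != 0 -> head 0 s \in s.
Proof. by case: s => //= a s _; rewrite mem_head. Qed.

Definition linked (d : rel nat) (x y : nat) : Prop :=
  exists p, path d x p && (last x p == y).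

Lemma linked_refl d x : linked d x x.
Proof. by rewrite /linked; exists [::] => /=. Qed.

Lemma linked_step d x y z : linked d x y -> d y z -> linked d x z.
Proof.
case=> p /andP [dp /eqP py] dyz.
by exists (rcons p z); rewrite rcons_path dp py dyz last_rcons eqxx.
Qed.

Lemma linked_trans d x y z : linked d x y -> linked d y z -> linked d x z.
Proof.
case=> p /andP [dp /eqP py] [q /andP [dq qz]].
by exists (p ++ q); rewrite cat_path last_cat py dp dq.
Qed.

Lemma linked_sym d x y : symmetric d -> linked d x y -> linked d y x.
Proof.
move=> dsym [p /andP [dp /eqP <-]]; exists (rev (belast x p)).
rewrite rev_path (eq_path (e' := d)) ?dp; last by move=> a b; rewrite dsym.
by case/lastP: p {dp} => [|p z] //=; rewrite belast_rcons last_rcons rev_cons last_rcons.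
Qed.

Lemma path_exit (d : rel nat) (P : pred nat) a p : path d a p -> P a -> ~~ P (last a p) ->
  exists a' b', [/\ P a', ~~ P b' & d a' b'].
Proof.
elim: p a => [|b p IH] a /=; first by move=> _ ->.
move=> /andP [dab dp] Pa; case Pb: (P b); first exact: IH.
by move=> _; exists a, b; rewrite Pb.
Qed.

(* In an acyclic simple graph e, if a subgraph d links the ends of an edge uv
   of e, then d contains uv: otherwise a shortest d-walk from u to v, closed by
   vu, would be a cycle of e on at least three vertices. *)
Lemma acyclic_linked_edge (e d : rel nat) u v :
  symmetric e -> irreflexive e -> acyclic e -> subrel d e ->
  linked d u v -> e u v -> d u v.
Proof.
move=> esym eirr eacyc de [p /andP [dp /eqP pv]] euv; apply/negPn/negP => nduv.
move: pv; case: (shortenP dp) => q dq uq _ qv.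
have long_q : 2 < size (u :: q).
  case: q dq uq qv => [_ _ /= uv|y [|z s]] //=; first by rewrite uv eirr in euv.
  by move=> /andP [duy _] _ yv; rewrite -yv duy in nduv.
apply/negP: (eacyc _ uq long_q).
by rewrite /= rcons_path qv -esym euv andbT (sub_path de dq).
Qed.

Section OrderedDFSRun.

Variables (n : nat) (e : rel nat).

Definition odfs_A (i : nat) : seq nat := (odfs_state n e i).2.

Lemma odfs_O_succ i : odfs_O n e i.+1 = odfs_N n e i ++ behead (odfs_O n e i).
Proof. by []. Qed.

Lemma odfs_A_succ i : odfs_A i.+1 = odfs_v n e i :: odfs_A i.
Proof. by []. Qed.

Lemma mem_odfs_N i y : (y \in odfs_N n e i) =
  [&& y \in iota 1 n, e (odfs_v n e i) y, y \notin odfs_A i & y \notin odfs_O n e i].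
Proof. by rewrite /odfs_N /odfs_new mem_filter andbA andbA andbC !andbA. Qed.

(* The top v_i belongs to O_i unless the stack is empty (then v_i = 0). *)
Lemma top_in_stack i : odfs_v n e i != 0 -> odfs_v n e i \in odfs_O n e i.
Proof. exact: head_mem_nonzero. Qed.

Lemma odfs_stack_invariant i :
  uniq (odfs_O n e i) /\ {in odfs_O n e i, forall x, x \notin odfs_A i}.
Proof.
elim: i => [|i [Ouniq Ofresh]]; first by [].
have below_top x : x \in behead (odfs_O n e i) -> x != odfs_v n e i.
  rewrite /odfs_v; case: (odfs_O n e i) Ouniq => //= a s /andP [as_ _] xs.
  by apply/eqP => xa; rewrite -xa xs in as_.
split.
- rewrite odfs_O_succ cat_uniq filter_uniq ?iota_uniq //=; apply/andP; split.
    apply/hasPn => x /mem_behead xO; rewrite mem_odfs_N.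
    by apply/negP => /and4P [_ _ _]; rewrite xO.
  by move: Ouniq; case: (odfs_O n e i) => //= a s /andP [].
- move=> x; rewrite odfs_O_succ odfs_A_succ mem_cat in_cons => /orP [|xb].
    rewrite mem_odfs_N => /and4P [xi _ xA xO]; rewrite negb_or xA andbT.
    apply/eqP => xv; move: xi; rewrite mem_iota xv => /andP [v1 _].
    by move: xO; rewrite xv top_in_stack // -lt0n.
  by rewrite negb_or below_top //= Ofresh ?(mem_behead xb).
Qed.

Lemma odfs_A_mono k i : k <= i -> {subset odfs_A k <= odfs_A i}.
Proof.
move=> /subnK <- x; elim: (i - k) => [//|d IH] xA.
by rewrite addSn odfs_A_succ in_cons IH ?orbT.
Qed.

Lemma odfs_O_persist k i x : k <= i -> x \in odfs_O n e k ->
  (x \in odfs_O n e i) || (x \in odfs_A i).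
Proof.
move=> /subnK <-; elim: (i - k) => [|d IH] xO; first by rewrite add0n xO.
rewrite addSn odfs_O_succ odfs_A_succ mem_cat in_cons.
case/orP: (IH xO) => [xOd|->]; last by rewrite !orbT.
case: (eqVneq x (odfs_v n e (d + k))) => [->|xv]; first by rewrite !orbT.
by rewrite (mem_behead_neq_head xOd xv) orbT.
Qed.

Lemma visited_index i x : x \in odfs_A i -> exists2 j, j < i & odfs_v n e j = x.
Proof.
elim: i => [//|i IH]; rewrite odfs_A_succ in_cons => /orP [/eqP ->|/IH [j ji <-]].
  by exists i.
by exists j => //; apply: ltnW.
Qed.

Lemma size_odfs_A i : size (odfs_A i) = i.
Proof. by elim: i => // i IH; rewrite odfs_A_succ /= IH. Qed.

Lemma dfs_tree_sym : symmetric (dfs_tree n e).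
Proof. by move=> u v; apply: eq_has => i; rewrite orbC. Qed.

Lemma dfs_tree_edge i y : i < n -> y \in odfs_N n e i -> dfs_tree n e (odfs_v n e i) y.
Proof. by move=> lt yN; apply/hasP; exists i; rewrite ?mem_iota ?eqxx ?yN. Qed.

Hypothesis e_graph : graph_on n e.

Lemma dfs_tree_sub : subrel (dfs_tree n e) e.
Proof.
case: e_graph => esym _ _ u v /hasP [i _].
by case/orP=> /andP [/eqP ->]; rewrite mem_odfs_N => /and4P [_ ? _ _] //; rewrite esym.
Qed.

Lemma odfs_O_range i x : 0 < n -> x \in odfs_O n e i -> x \in iota 1 n.
Proof.
move=> n0; elim: i x => [|i IH] x; first by rewrite inE => /eqP ->; rewrite mem_iota.
rewrite odfs_O_succ mem_cat => /orP [|/mem_behead /IH //].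
by rewrite mem_odfs_N => /andP [].
Qed.

Lemma odfs_O_nil k i : k <= i -> odfs_O n e k = [::] -> odfs_O n e i = [::].
Proof.
case: e_graph => _ _ erange /subnK <-; elim: (i - k) => [//|d IH] Ok.
rewrite addSn odfs_O_succ IH //= cats0.
case E: (odfs_N n e (d + k)) => [//|y s].
have : y \in odfs_N n e (d + k) by rewrite E mem_head.
rewrite mem_odfs_N /odfs_v IH // => /and4P [_ ey _ _].
by have := erange _ _ ey.
Qed.

Lemma odfs_A_uniq_range m : 0 < n -> odfs_O n e m != [::] ->
  uniq (odfs_A m) && all (mem (iota 1 n)) (odfs_A m).
Proof.
move=> n0 Om; have : forall k, k <= m -> odfs_O n e k != [::].
  by move=> k km; apply: contra Om => /eqP /(odfs_O_nil km) ->.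
elim: m {Om} => [//|m IH] Onil.
have /andP [Auniq Arange] := IH (fun k km => Onil k (leqW km)).
rewrite odfs_A_succ /= Auniq Arange andbT.
have vO : odfs_v n e m \in odfs_O n e m.
  by move: (Onil m (leqnSn m)); rewrite /odfs_v; case: (odfs_O n e m) => // a s _; apply: mem_head.
by rewrite (proj2 (odfs_stack_invariant m) _ vO) (odfs_O_range n0 vO).
Qed.

Lemma neighbour_of_visited m a b : a \in odfs_A m -> e a b ->
  (b \in odfs_O n e m) || (b \in odfs_A m).
Proof.
case: e_graph => _ _ erange aA eab.
have [j jm vja] := visited_index aA.
have bi : b \in iota 1 n.
  by have /andP [_ /andP [b1 bn]] := erange _ _ eab; rewrite mem_iota b1 add1n ltnS.
have seen_next : (b \in odfs_O n e j.+1) || (b \in odfs_A j.+1).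
  rewrite odfs_O_succ mem_cat odfs_A_succ in_cons.
  have [bA|bA] := boolP (b \in odfs_A j); first by rewrite !orbT.
  case: (eqVneq b (odfs_v n e j)) => [|bv]; first by rewrite orbT.
  have [bO|bO] := boolP (b \in odfs_O n e j); first by rewrite (mem_behead_neq_head bO bv) orbT.
  by rewrite mem_odfs_N bi vja eab bA bO.
case/orP: seen_next => [/(odfs_O_persist jm) // | /(odfs_A_mono jm) ->].
by rewrite orbT.
Qed.

Hypothesis e_conn : connected_on n e.

(* In a connected graph oDFS visits every vertex within n steps: otherwise some
   unvisited vertex b is stacked at step n, so the n visited vertices and b
   would be n + 1 distinct vertices of [n]. *)
Lemma odfs_visits_all x : 1 <= x <= n -> x \in odfs_A n.
Proof.
move=> xn; have n0 : 0 < n by case/andP: xn => /leq_trans; apply.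
apply/negPn/negP => xA.
have rootA : 1 \in odfs_A n by apply: (@odfs_A_mono 1) => //; rewrite mem_head.
have [p /andP [ep /eqP px]] := @e_conn 1 x (ltac:(by rewrite /= n0)) xn.
have [a [b [aA bA eab]]] := path_exit ep rootA (ltac:(by rewrite px)).
have bO : b \in odfs_O n e n by case/orP: (neighbour_of_visited aA eab) => // /(negP bA).
have Onil : odfs_O n e n != [::] by case: (odfs_O n e n) bO.
have /andP [Auniq Arange] := odfs_A_uniq_range n0 Onil.
have : size (b :: odfs_A n) <= size (iota 1 n).
  apply: uniq_leq_size; first by rewrite /= bA Auniq.
  by move=> y; rewrite in_cons => /orP [/eqP -> | /(allP Arange) //]; apply: odfs_O_range bO.
by rewrite /= size_iota size_odfs_A ltnn.
Qed.

Lemma odfs_seen_linked m x : m <= n -> x != 0 ->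
  (x \in odfs_O n e m) || (x \in odfs_A m) -> linked (dfs_tree n e) 1 x.
Proof.
case: e_graph => _ _ erange; elim: m x => [|m IH] x mn x0.
  by rewrite orbF inE => /eqP ->; apply: linked_refl.
have IHm y : y != 0 -> (y \in odfs_O n e m) || (y \in odfs_A m) -> linked (dfs_tree n e) 1 y.
  exact: IH (ltnW mn).
have v_seen : odfs_v n e m != 0 -> (odfs_v n e m \in odfs_O n e m) || (odfs_v n e m \in odfs_A m).
  by move=> v0; rewrite top_in_stack.
rewrite odfs_O_succ odfs_A_succ mem_cat in_cons -!orbA => /or4P [xN|xb|/eqP xv|xA].
- have := xN; rewrite mem_odfs_N => /and4P [_ evx _ _].
  have v0 : odfs_v n e m != 0.
    by have /andP [/andP [v1 _] _] := erange _ _ evx; rewrite -lt0n.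
  exact: linked_step (IHm _ v0 (v_seen v0)) (dfs_tree_edge mn xN).
- by apply: IHm => //; rewrite (mem_behead xb).
- by rewrite xv in x0 *; apply: IHm => //; apply: v_seen.
- by apply: IHm => //; rewrite xA orbT.
Qed.

Lemma dfs_tree_connected u v : 1 <= u <= n -> 1 <= v <= n -> linked (dfs_tree n e) u v.
Proof.
have linked_root x : 1 <= x <= n -> linked (dfs_tree n e) 1 x.
  move=> xn; apply: (@odfs_seen_linked n) => //; first by case/andP: xn; rewrite lt0n.
  by rewrite odfs_visits_all ?orbT.
move=> un vn; apply: linked_trans (linked_root _ vn).
exact: linked_sym dfs_tree_sym (linked_root _ un).
Qed.

Lemma first_visited_end u v : 1 <= u <= n -> 1 <= v <= n ->
  exists2 j, j < n & ((odfs_v n e j == u) && (v \notin odfs_A j))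
                  || ((odfs_v n e j == v) && (u \notin odfs_A j)).
Proof.
move=> un vn.
have exP : exists m, (u \in odfs_A m) || (v \in odfs_A m).
  by exists n; rewrite odfs_visits_all.
case: (ex_minnP exP) => m Pm minm.
have mn : m <= n by apply: minm; rewrite odfs_visits_all.
case: m Pm minm mn => [|j]; first by [].
move=> Pj minm jn; exists j => //.
have /norP [nu nv] : ~~ ((u \in odfs_A j) || (v \in odfs_A j)).
  by apply/negP => /minm; rewrite ltnn.
rewrite nu nv !andbT; move: Pj; rewrite odfs_A_succ !in_cons (negbTE nu) (negbTE nv) !orbF.
by case/orP => /eqP ->; rewrite eqxx ?orbT.
Qed.

(* An edge ab of G missing from T(G), with a on top and b unvisited, has both
   ends on the stack: were b fresh, oDFS would make ab a tree edge. *)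
Lemma nontree_edge_top j a b : j < n -> odfs_v n e j = a -> a != 0 -> e a b ->
  b \notin odfs_A j -> b \in iota 1 n -> ~~ dfs_tree n e a b ->
  (a \in odfs_O n e j) && (b \in odfs_O n e j).
Proof.
move=> jn va a0 eab bA bi nd.
rewrite -va top_in_stack ?va //=; apply/negPn/negP => bO.
by move: nd; rewrite -va dfs_tree_edge // mem_odfs_N bi va eab bA bO.
Qed.

Lemma nontree_edge_on_stack u v : e u v -> ~~ dfs_tree n e u v ->
  exists2 j, j < n & (u \in odfs_O n e j) && (v \in odfs_O n e j).
Proof.
case: e_graph => esym _ erange euv nd.
have /andP [un vn] := erange _ _ euv.
have in_iota x : 1 <= x <= n -> x \in iota 1 n.
  by case/andP=> x1 xn; rewrite mem_iota x1 add1n ltnS.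
have nonzero x : 1 <= x <= n -> x != 0 by case/andP; rewrite lt0n.
have [j jn /orP [/andP [/eqP vu vA]|/andP [/eqP vv uA]]] := first_visited_end un vn;
  exists j => //; first by apply: nontree_edge_top; rewrite ?in_iota ?nonzero.
rewrite andbC; apply: nontree_edge_top; rewrite ?in_iota ?nonzero // 1?esym //.
by rewrite dfs_tree_sym.
Qed.

End OrderedDFSRun.

(* A permitted edge of t is never fresh: if v_i is one end, the other end is
   stacked or visited at step i.  If the ends share the stack O_k with k <= i
   this is persistence; if k > i then v_i would be visited and stacked at k. *)
Lemma permitted_not_fresh n (t : rel nat) i y : permitted n t (odfs_v n t i) y ->
  (y \in odfs_O n t i) || (y \in odfs_A n t i).
Proof.
case/andP=> _ /hasP [k _] /andP [vO yO].
case: (leqP k i) => ki; first exact: odfs_O_persist yO.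
have vA : odfs_v n t i \in odfs_A n t k by apply: (odfs_A_mono ki); rewrite mem_head.
by move: (proj2 (odfs_stack_invariant n t k) _ vO); rewrite vA.
Qed.

(* For a tree T, T(T) = T: T(T) is a connected spanning subgraph of T. *)
Lemma dfs_tree_of_tree n (t : rel nat) u v : is_tree n t -> dfs_tree n t u v = t u v.
Proof.
case=> tg tc tacyc; have [tsym tirr trange] := tg.
apply/idP/idP; first exact: (dfs_tree_sub tg).
move=> tuv; have /andP [un vn] := trange _ _ tuv.
apply: (acyclic_linked_edge tsym _ tacyc (dfs_tree_sub tg)) tuv.
  by move=> x; apply/negbTE/tirr.
exact: (dfs_tree_connected tg tc un vn).
Qed.

Section ComparingRuns.

Variables (n : nat) (e1 e2 : rel nat).

(* e1 and e2 agree on the edges from the top to the fresh vertices at step i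
   of the run on e1: these are the only edges step i looks at. *)
Definition agree_on_fresh (i : nat) : Prop :=
  forall y, y \in iota 1 n -> y \notin odfs_A n e1 i -> y \notin odfs_O n e1 i ->
    e1 (odfs_v n e1 i) y = e2 (odfs_v n e1 i) y.

Hypothesis agree : forall i, i < n -> odfs_state n e1 i = odfs_state n e2 i ->
  agree_on_fresh i.

Lemma odfs_new_agree i : i < n -> odfs_state n e1 i = odfs_state n e2 i ->
  odfs_N n e1 i = odfs_N n e2 i.
Proof.
move=> lt E; rewrite /odfs_N -E; apply: eq_in_filter => y yi.
have [yA|] := boolP (y \notin (odfs_state n e1 i).2); last by rewrite !andbF.
have [yO|] := boolP (y \notin (odfs_state n e1 i).1); last by rewrite !andbF.
by rewrite (agree lt E yi yA yO).
Qed.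

Lemma odfs_state_agree i : i <= n -> odfs_state n e1 i = odfs_state n e2 i.
Proof.
elim: i => [//|i IH lt]; have E := IH (ltnW lt).
rewrite /odfs_state !iterS -!/(odfs_state _ _ _) /odfs_step -E.
by move: (odfs_new_agree lt E); rewrite /odfs_N -E => ->.
Qed.

Lemma dfs_tree_agree u v : dfs_tree n e1 u v = dfs_tree n e2 u v.
Proof.
apply: eq_in_has => i; rewrite mem_iota add0n => /andP [_ lt].
have E := odfs_state_agree (ltnW lt).
have Ev : odfs_v n e1 i = odfs_v n e2 i by rewrite /odfs_v /odfs_O E.
by rewrite Ev (odfs_new_agree lt E).
Qed.

End ComparingRuns.

Theorem lemma2 (n : nat) (T G : rel nat) :
  is_tree n T -> graph_on n G -> connected_on n G ->
  ((forall u v, dfs_tree n G u v = T u v) <->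
   exists S : rel nat,
     (forall u v, S u v -> permitted n T u v) /\
     (forall u v, G u v = T u v || S u v)).
Proof.
move=> Ttree Ggraph Gconn; have [_ Girr _] := Ggraph.
split=> [GT | [S [Sperm GTS]] u v].
- (* T(G) = T: the runs on G and T coincide, so non-tree edges are permitted. *)
  have TG : subrel T G by move=> u v; rewrite -GT; exact: (dfs_tree_sub Ggraph).
  have same_run i : i <= n -> odfs_state n G i = odfs_state n T i.
    apply: odfs_state_agree => {}i lt _ y yi yA yO; apply/idP/idP => [Gy|/TG //].
    by rewrite -GT dfs_tree_edge // mem_odfs_N yi Gy yA yO.
  exists (fun u v => G u v && ~~ T u v); split=> u v; last first.
    by case: (boolP (T u v)) => [/TG ->|_] /=; rewrite ?andbT.
  case/andP=> Guv nTuv; have nGuv : ~~ dfs_tree n G u v by rewrite GT.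
  have [j jn /andP [uO vO]] := nontree_edge_on_stack Ggraph Gconn Guv nGuv.
  rewrite /permitted nTuv andbT; apply/andP; split.
    by apply: contraTneq Guv => ->; rewrite Girr.
  by apply/hasP; exists j; rewrite ?mem_iota // /odfs_O -same_run ?uO ?vO // ltnW.
- (* G = T + S: permitted edges are never fresh, so the runs on G and T coincide. *)
  rewrite -(dfs_tree_of_tree _ _ Ttree); apply: dfs_tree_agree => i _ E y _.
  rewrite /odfs_v /odfs_A /odfs_O E -/(odfs_O n T i) -/(odfs_A n T i) -/(odfs_v n T i) => yA yO.
  rewrite GTS; case: (boolP (S _ y)) => [/Sperm /permitted_not_fresh|]; last by rewrite orbF.
  by rewrite (negbTE yA) (negbTE yO).
Qed.
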